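(* Let $p(x)=\sum_{k=2}^m a_kx^k$ be a real polynomial of degree $m$ (so $p(0)=p'(0)=0$), convex on an interval $[0,A]$, and suppose $p(A)>1$. Then $p(x)=1$ has a unique solution $\mu$ in $[0,A]$, and $$\mu\approx\left[\sum_{k=2}^m|a_k|^{1/k}\right]^{-1},$$ where the implied constants depend only on $m$.
   Context: $X\approx Y$ means $cY\le X\le c^{-1}Y$ for some $c>0$ depending only on $m$ (not on $A$ or the coefficients). *)

From HB Require Import structures.
From mathcomp Require Import all_boot all_order all_algebra.
From mathcomp Require Import all_classical all_reals all_analysis.
Set Implicit Arguments. Unset Strict Implicit. Unset Printing Implicit Defensive.
Import Order.TTheory GRing.Theory Num.Theory.
Local Open Scope ring_scope.

Definition convex_on_interval (R : realType) (a b : R) (f : R -> R) : Prop :=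
  forall x y t : R, a <= x <= b -> a <= y <= b -> 0 <= t <= 1 ->
    f (t * x + (1 - t) * y) <= t * f x + (1 - t) * f y.

Definition coef_root_sum (R : realType) (m : nat) (p : {poly R}) : R :=
  \sum_(2 <= k < m.+1) powR `|p`_k| (k%:R^-1).

From HB Require Import structures.
From mathcomp Require Import all_boot all_order all_algebra.
From mathcomp Require Import all_classical all_reals all_analysis.
From mathcomp Require Import lra.
Import Order.TTheory GRing.Theory Num.Theory.
Set Implicit Arguments.
Unset Strict Implicit.
Unset Printing Implicit Defensive.
Local Open Scope ring_scope.

(* Convexity together with p(0) = 0 gives the chord bound p(x) <= (x/y) p(y)
   for 0 <= x <= y <= A; this yields uniqueness of the root mu of p = 1, and,
   since p(tx) = O(t^2), also p >= 0 on [0, A].  Hence the rescaled polynomial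
   q(t) = p(mu t) satisfies 0 <= q <= 1 on [0, 1], in particular at the grid
   points j/m, and inverting the Vandermonde matrix of that grid bounds its
   coefficients |a_k| mu^k by a constant C(m) >= 1; so mu |a_k|^(1/k) <= C
   and, with S = sum_k |a_k|^(1/k), mu S <= m C.  Conversely
   1 = p(mu) <= sum_k (mu |a_k|^(1/k))^k forces mu S >= 1: were mu S < 1,
   every mu |a_k|^(1/k) < 1 would exceed its k-th power. *)

Lemma ler_sum_term (R : numDomainType) (I : eqType) (r : seq I) (F : I -> R)
    (j : I) :
  {in r, forall i, 0 <= F i} -> j \in r -> F j <= \sum_(i <- r) F i.
Proof.
move=> F0 jr; rewrite (big_rem j) //= lerDl big_seq sumr_ge0 // => i /mem_rem.
exact: F0.
Qed.

Lemma sum_ge1_of_sum_expn_ge1 (R : realDomainType) (I : eqType) (r : seq I)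
    (b : I -> R) (e : I -> nat) :
  {in r, forall i, 0 <= b i} -> {in r, forall i, (0 < e i)%N} ->
  1 <= \sum_(i <- r) b i ^+ e i -> 1 <= \sum_(i <- r) b i.
Proof.
move=> b0 e0 ge1; rewrite leNgt; apply/negP => lt1.
suff : \sum_(i <- r) b i ^+ e i <= \sum_(i <- r) b i.
  by move=> /(le_trans ge1) /(lt_le_trans lt1); rewrite ltxx.
rewrite [leLHS]big_seq [leRHS]big_seq.
apply: ler_sum => i ir; apply: ler_iXnr; rewrite ?e0 ?b0 //.
exact: ltW (le_lt_trans (ler_sum_term b0 ir) lt1).
Qed.

Lemma exprn_powRV (R : realType) (x : R) (n : nat) :
  0 <= x -> (0 < n)%N -> (x `^ n%:R^-1) ^+ n = x.
Proof.
move=> x0 n0; rewrite -powR_mulrn ?powR_ge0 // -powRrM mulVf ?powRr1 //.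
by rewrite pnatr_eq0 -lt0n.
Qed.

Lemma convex_chord_origin (R : realType) (A : R) (f : R -> R) (x y : R) :
  convex_on_interval 0 A f -> f 0 = 0 ->
  0 <= x <= y -> y <= A -> 0 < y -> f x <= x / y * f y.
Proof.
move=> fconv f0 /andP[x0 xy] yA y0.
have A0 : 0 <= A := le_trans (ltW y0) yA.
have := fconv y 0 (x / y); rewrite (ltW y0) yA lexx A0 divr_ge0 ?(ltW y0) //=.
rewrite ler_pdivrMr // mul1r xy => /(_ isT isT isT).
by rewrite mulr0 addr0 f0 mulr0 addr0 divfK // gt_eqF.
Qed.

Lemma convex_level_uniq (R : realType) (A : R) (f : R -> R) (c x y : R) :
  convex_on_interval 0 A f -> f 0 = 0 -> 0 < c ->
  0 <= x <= A -> 0 <= y <= A -> f x = c -> f y = c -> x = y.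
Proof.
move=> fconv f0 c0.
wlog xy : x y / x <= y => [hwlog|] xI yI fx fy.
  by case: (leP x y) => [|/ltW] /hwlog => [->|/(_ yI xI fy fx)->].
have [//|x_neq_y] := eqVneq x y.
have xlty : x < y by rewrite lt_neqAle x_neq_y.
case/andP: xI => x0 _; case/andP: yI => _ yA.
have y0 : 0 < y := le_lt_trans x0 xlty.
have := convex_chord_origin fconv f0 (_ : 0 <= x <= y) yA y0.
rewrite x0 (ltW xlty) fx fy => /(_ isT).
rewrite -[leLHS]mul1r ler_pM2r // ler_pdivlMr // mul1r.
by rewrite leNgt xlty.
Qed.

Lemma poly_ivt0 (R : realType) (p : {poly R}) (b c : R) :
  0 <= b -> p.[0] <= c <= p.[b] -> exists2 x, 0 <= x <= b & p.[x] = c.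
Proof.
move=> b0 /andP[p0c cpb].
have [x] : exists2 x, x \in `[0, b] & p.[x] = c.
  apply: IVT; first exact: b0.
  - apply: (@continuous_subspaceT _ _ `[0, b]%classic (horner p)).
    exact: continuous_horner.
  - by rewrite ge_min le_max p0c cpb orbT.
by rewrite in_itv /= => xI pxc; exists x.
Qed.

Lemma norm_horner_scale_le (R : numDomainType) (p : {poly R}) (t x : R) :
  p`_0 = 0 -> p`_1 = 0 -> `|t| <= 1 ->
  `|p.[t * x]| <= `|t| ^+ 2 * \sum_(i < size p) `|p`_i| * `|x| ^+ i.
Proof.
move=> p0 p1 t1; rewrite horner_coef mulr_sumr.
apply: le_trans (ler_norm_sum _ _ _) _; apply: ler_sum => -[i _] _ /=.
case: i => [|[|i]].
- by rewrite p0 !(mul0r, normr0, mulr0).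
- by rewrite p1 !(mul0r, normr0, mulr0).
rewrite normrM !normrX normrM exprMn mulrCA.
apply: ler_wpM2r; first by rewrite mulr_ge0 ?exprn_ge0.
exact: ler_wiXn2l.
Qed.

Lemma convex_poly_ge0 (R : realType) (A : R) (p : {poly R}) (x : R) :
  p`_0 = 0 -> p`_1 = 0 -> convex_on_interval 0 A (horner p) ->
  0 <= x <= A -> 0 <= p.[x].
Proof.
move=> p0 p1 pconv /andP[x0 xA].
set K := \sum_(i < size p) `|p`_i| * `|x| ^+ i.
have K0 : 0 <= K by rewrite sumr_ge0 // => i _; rewrite mulr_ge0 ?exprn_ge0.
(* p(tx) <= t p(x) by convexity, while |p(tx)| <= t^2 K *)
have small_t : forall t, 0 < t <= 1 -> - p.[x] <= t * K.
  move=> t /andP[t0 t1].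
  have := pconv x 0 t; rewrite x0 xA lexx (le_trans x0 xA) (ltW t0) t1.
  move=> /(_ isT isT isT); rewrite mulr0 addr0 horner_coef0 p0 mulr0 addr0.
  have t_norm : `|t| <= 1 by rewrite ger0_norm ?(ltW t0).
  have := norm_horner_scale_le x p0 p1 t_norm.
  rewrite ger0_norm ?(ltW t0) // => /lerNnormlW lb ub.
  have := le_trans lb ub; rewrite -/K; nra.
rewrite leNgt; apply/negP => px_lt0.
pose q := - p.[x]; have q0 : 0 < q by rewrite oppr_gt0.
have Kq0 : 0 < K + q by rewrite ltr_wpDl.
have := small_t (q / (K + q)); rewrite -/q divr_gt0 //= ler_pdivrMr // mul1r.
rewrite lerDr K0 => /(_ isT); rewrite mulrAC ler_pdivlMr //; nra.
Qed.

Lemma poly_coef_bounded_on_grid (R : numFieldType) (m : nat) : (0 < m)%N ->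
  exists C : R, 1 <= C /\ forall q : {poly R}, (size q <= m.+1)%N ->
    (forall j, (j <= m)%N -> `|q.[j%:R / m%:R]| <= 1) -> forall k, `|q`_k| <= C.
Proof.
move=> m0.
pose V := Vandermonde m.+1 (\row_(j < m.+1) (j%:R / m%:R : R)).
have V_unit : V \in unitmx.
  rewrite unitmxE unitfE det_Vandermonde; apply/prodf_neq0 => i _.
  apply/prodf_neq0 => j ij; rewrite !mxE subr_eq0 gt_eqF //.
  by rewrite ltr_pM2r ?invr_gt0 ?ltr0n // ltr_nat.
pose W := invmx V.
exists (1 + \sum_(j < m.+1) \sum_(k < m.+1) `|W j k|); split.
  by rewrite lerDl sumr_ge0 // => j _; rewrite sumr_ge0.
have C0 : 0 <= 1 + \sum_(j < m.+1) \sum_(k < m.+1) `|W j k|.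
  by rewrite addr_ge0 // sumr_ge0 // => j _; rewrite sumr_ge0.
move=> q qsize q_grid k.
have [km|mk] := ltnP k m.+1; last first.
  by rewrite nth_default ?normr0 // (leq_trans qsize mk).
pose qv := \row_(i < m.+1) q`_i.
have qV_grid (j : 'I_m.+1) : (qv *m V) 0 j = q.[j%:R / m%:R].
  rewrite (horner_coef_wide _ qsize) mxE.
  by apply: eq_bigr => i _; rewrite !mxE.
have -> : q`_k = (qv *m V *m W) 0 (Ordinal km) by rewrite mulmxK // mxE.
rewrite mxE; apply: le_trans (ler_norm_sum _ _ _) _.
apply: (@le_trans _ _ (\sum_(j < m.+1) `|W j (Ordinal km)|)).
  by apply: ler_sum => j _; rewrite normrM qV_grid ler_piMl // q_grid // -ltnS.
apply: ler_wpDl => //; apply: ler_sum => j _.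
by apply: (ler_sum_term (F := fun k => `|W j k|)) => //; rewrite mem_index_enum.
Qed.

Lemma convex_poly_coef_bound (R : realType) (m : nat) : (0 < m)%N ->
  exists C : R, 1 <= C /\ forall (A mu : R) (p : {poly R}),
    (size p <= m.+1)%N -> p`_0 = 0 -> p`_1 = 0 ->
    convex_on_interval 0 A (horner p) -> 0 < mu <= A -> p.[mu] = 1 ->
    forall k, `|p`_k| * mu ^+ k <= C.
Proof.
move=> m0; have [C [C1 grid_bound]] := poly_coef_bounded_on_grid R m0.
exists C; split=> // A mu p psize p0 p1 pconv /andP[mu0 muA] pmu k.
have p_at0 : p.[0] = 0 by rewrite horner_coef0.
have [km|mk] := ltnP k m.+1; last first.
  rewrite nth_default ?normr0 ?mul0r ?(le_trans ler01 C1) //.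
  exact: leq_trans psize mk.
pose q := \poly_(i < m.+1) (p`_i * mu ^+ i).
have q_horner t : q.[t] = p.[mu * t].
  rewrite horner_poly (horner_coef_wide _ psize).
  by apply: eq_bigr => i _; rewrite exprMn mulrA.
have := grid_bound q (size_poly _ _) _ k.
rewrite coef_poly km normrM normrX (ger0_norm (ltW mu0)); apply=> j jm.
rewrite q_horner; set x := mu * _.
have x0 : 0 <= x by rewrite mulr_ge0 ?divr_ge0 ?ler0n ?(ltW mu0).
have x_le_mu : x <= mu.
  rewrite /x -[leRHS]mulr1 ler_wpM2l ?(ltW mu0) //.
  by rewrite ler_pdivrMr ?ltr0n // mul1r ler_nat.
rewrite ger0_norm; last first.
  by apply: convex_poly_ge0 p0 p1 pconv _; rewrite x0 (le_trans x_le_mu muA).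
apply: le_trans (convex_chord_origin pconv p_at0 _ muA mu0) _.
  by rewrite x0 x_le_mu.
by rewrite pmu mulr1 ler_pdivrMr // mul1r.
Qed.

Lemma coef_root_sum_ge1 (R : realType) (m : nat) (p : {poly R}) (x : R) :
  (0 < m)%N -> (size p <= m.+1)%N -> p`_0 = 0 -> p`_1 = 0 -> 0 <= x ->
  1 <= p.[x] -> 1 <= x * coef_root_sum m p.
Proof.
move=> m0 psize p0 p1 x0 px1.
rewrite /coef_root_sum mulr_sumr; apply: (@sum_ge1_of_sum_expn_ge1 _ _ _ _ id).
- by move=> k _; rewrite mulr_ge0 ?powR_ge0.
- by move=> k; rewrite mem_index_iota => /andP[k2 _]; apply: leq_trans k2.
apply: le_trans px1 _.
rewrite (horner_coef_wide _ psize) -(big_mkord xpredT (fun k => p`_k * x ^+ k)).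
rewrite big_ltn // big_ltn // p0 p1 !mul0r !add0r.
apply: ler_sum_nat => k /andP[k2 _] /=.
rewrite exprMn exprn_powRV ?(leq_trans _ k2) // mulrC ler_wpM2l ?exprn_ge0 //.
exact: ler_norm.
Qed.

Lemma coef_root_sum_le (R : realType) (m : nat) (p : {poly R}) (x C : R) :
  0 < x -> 1 <= C -> (forall k, `|p`_k| * x ^+ k <= C) ->
  x * coef_root_sum m p <= m%:R * C.
Proof.
move=> x0 C1 coef_bound.
have C0 : 0 <= C := le_trans ler01 C1.
rewrite /coef_root_sum mulr_sumr.
apply: (@le_trans _ _ (\sum_(2 <= k < m.+1) C)).
  apply: ler_sum_nat => k /andP[k2 _]; have k0 : (0 < k)%N := ltnW k2.
  rewrite -(ler_pXn2r k0) ?nnegrE ?mulr_ge0 ?powR_ge0 ?(ltW x0) //.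
  by rewrite exprMn exprn_powRV // mulrC (le_trans (coef_bound k)) // ler_eXnr.
rewrite sumr_const_nat -[leLHS]mulr_natl; apply: ler_wpM2r => //.
by rewrite ler_nat subSS leq_subr.
Qed.

Theorem proposition4p6 (R : realType) (m : nat) (hm : (2 <= m)%N) :
  exists c : R, 0 < c /\
  forall (A : R) (p : {poly R}),
    size p = m.+1 -> p`_0 = 0 -> p`_1 = 0 -> 0 < A ->
    convex_on_interval 0 A (fun x => p.[x]) -> 1 < p.[A] ->
    exists mu : R,
      [/\ 0 <= mu <= A, p.[mu] = 1,
          (forall x : R, 0 <= x <= A -> p.[x] = 1 -> x = mu) &
          c * (coef_root_sum m p)^-1 <= mu <= c^-1 * (coef_root_sum m p)^-1].
Proof.
have [C [C1 coef_bound]] := convex_poly_coef_bound R (ltnW hm).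
have mC1 : 1 <= m%:R * C.
  apply: (le_trans C1); apply: ler_peMl; first exact: le_trans ler01 C1.
  by rewrite ler1n ltnW.
exists (m%:R * C)^-1; split; first by rewrite invr_gt0 (lt_le_trans ltr01 mC1).
move=> A p psize p0 p1 A0 pconv pA1.
have psize_le : (size p <= m.+1)%N by rewrite psize.
have p_at0 : p.[0] = 0 by rewrite horner_coef0.
have [mu /andP[mu0 muA] pmu] : exists2 mu, 0 <= mu <= A & p.[mu] = 1.
  by apply: poly_ivt0 (ltW A0) _; rewrite p_at0 ler01 ltW.
have mu_gt0 : 0 < mu.
  rewrite lt_def mu0 andbT; apply/eqP => mu_eq0.
  by move: pmu; rewrite mu_eq0 p_at0 => /eqP; rewrite eq_sym oner_eq0.
have lower : 1 <= mu * coef_root_sum m p.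
  by apply: (coef_root_sum_ge1 (ltnW hm) psize_le p0 p1 mu0); rewrite pmu.
have upper : mu * coef_root_sum m p <= m%:R * C.
  apply: (coef_root_sum_le m mu_gt0 C1).
  by apply: (coef_bound A mu p psize_le p0 p1 pconv _ pmu); rewrite mu_gt0.
have S_gt0 : 0 < coef_root_sum m p.
  by rewrite -(pmulr_rgt0 _ mu_gt0) (lt_le_trans ltr01).
exists mu; split=> //; first by rewrite mu0.
- move=> x xI px.
  by apply: (convex_level_uniq pconv p_at0 ltr01 xI _ px pmu); rewrite mu0.
rewrite ler_pdivrMr // ler_pdivlMr // invrK upper andbT.
by apply: le_trans lower; rewrite invf_le1 // (lt_le_trans ltr01 mC1).
Qed.
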